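(* For every integer $c\ge 1$, the functor $G\mapsto G/\Gamma_{c+1}(G)$ on groups is conditionally flat. In other words, if $1\to K\to G\to Q\to 1$ is an extension such that $1\to K/\Gamma_{c+1}K\to G/\Gamma_{c+1}G\to Q/\Gamma_{c+1}Q\to 1$ is again a short exact sequence, then for every homomorphism $X\to Q$ the pullback extension $1\to K\to G\times_Q X\to X\to 1$ has the same property.
   Context: The lower central series of a group $G$ is $\Gamma_1(G)=G$, $\Gamma_{i+1}(G)=[\Gamma_i(G),G]$; so $G/\Gamma_{c+1}(G)$ is the largest quotient of $G$ that is nilpotent of class at most $c$ (for $c=1$ this is the abelianization). A functor $L$ on groups is conditionally flat if for every extension $1\to N\to E\to Q\to 1$ such that $1\to LN\to LE\to LQ\to 1$ is short exact, and every homomorphism $Q'\to Q$, the pullback extension $1\to N\to E\times_Q Q'\to Q'\to 1$ also becomes short exact after applying $L$. *)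

From Stdlib Require Import ProofIrrelevance Setoid.

Set Implicit Arguments.
Unset Strict Implicit.

Record group := Group {
  carrier :> Type;
  gmul : carrier -> carrier -> carrier;
  ginv : carrier -> carrier;
  gone : carrier;
  gmulA : forall x y z, gmul x (gmul y z) = gmul (gmul x y) z;
  gmul1 : forall x, gmul gone x = x;
  gmulV : forall x, gmul (ginv x) x = gone }.

Arguments gmul {g} x y.
Arguments ginv {g} x.
Arguments gone {g}.

Section GroupFacts.
Variable G : group.



Lemma gmulVr (x : G) : gmul x (ginv x) = gone.
Proof.
  transitivity (gmul (gmul (ginv (ginv x)) (ginv x)) (gmul x (ginv x))).
  - rewrite gmulV, gmul1; reflexivity.
  - rewrite <- gmulA, (gmulA (ginv x) x), gmulV, gmul1, gmulV; reflexivity.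
Qed.

Lemma gmul1r (x : G) : gmul x gone = x.
Proof. rewrite <- (gmulV x), gmulA, gmulVr, gmul1; reflexivity. Qed.

Lemma ginv_uniq (a b : G) : gmul a b = gone -> a = ginv b.
Proof.
  intro H. rewrite <- (gmul1r a), <- (gmulVr b), gmulA, H, gmul1; reflexivity.
Qed.
End GroupFacts.

Record hom (G H : group) := Hom {
  hfun :> G -> H;
  hmul : forall x y, hfun (gmul x y) = gmul (hfun x) (hfun y) }.

Lemma hom1 (G H : group) (f : hom G H) : f gone = gone.
Proof.
  assert (E : gmul (f gone) (f gone) = f gone) by (rewrite <- hmul, gmul1; reflexivity).
  rewrite <- (gmul1r (f gone)), <- (gmulVr (f gone)), gmulA, E, gmulVr.
  reflexivity.
Qed.

Lemma homV (G H : group) (f : hom G H) (x : G) : f (ginv x) = ginv (f x).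
Proof. apply ginv_uniq. rewrite <- hmul, gmulV. apply hom1. Qed.

Inductive gen (G : group) (P : G -> Prop) : G -> Prop :=
| gen_base x : P x -> gen P x
| gen_one : gen P gone
| gen_mul x y : gen P x -> gen P y -> gen P (gmul x y)
| gen_inv x : gen P x -> gen P (ginv x).

Definition comm (G : group) (x y : G) : G :=
  gmul (gmul (ginv x) (ginv y)) (gmul x y).

(* lcs G k = Gamma_{k+1}(G): lcs G 0 = G, lcs G (k+1) = [lcs G k, G] *)
Fixpoint lcs (G : group) (k : nat) : G -> Prop :=
  match k with
  | O => fun _ => True
  | S k' => @gen G (fun z : G => exists a b : G, @lcs G k' a /\ z = comm a b)
  end.
Arguments lcs : clear implicits.

(* Lower central series with the paper's indexing: Gamma G 1 = G,
   Gamma G (i+1) = [Gamma G i, G]. *)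
Definition Gamma (G : group) (n : nat) : G -> Prop := lcs G (Nat.pred n).
Arguments Gamma : clear implicits.

(* x and y have the same image in G / Gamma_n(G) *)
Definition modeq (G : group) (n : nat) (x y : G) : Prop :=
  Gamma G n (gmul (ginv x) y).

Definition ses (K G Q : group) (i : hom K G) (p : hom G Q) : Prop :=
  (forall a b, i a = i b -> a = b) /\
  (forall q, exists g, p g = q) /\
  (forall g, p g = gone <-> exists k, i k = g).

(* 1 -> K/Gamma_n K -> G/Gamma_n G -> Q/Gamma_n Q -> 1 (induced maps)
   is short exact, written out on representatives. *)
Definition ses_quot (n : nat) (K G Q : group) (i : hom K G) (p : hom G Q) : Prop :=
  (forall a b, modeq n (i a) (i b) -> modeq n a b) /\
  (forall q, exists g, modeq n (p g) q) /\
  (forall g, modeq n (p g) gone <-> exists k, modeq n (i k) g).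

Lemma ses_comp (K G Q : group) (i : hom K G) (p : hom G Q) :
  ses i p -> forall k, p (i k) = gone.
Proof. intros [_ [_ H]] k. apply H. exists k; reflexivity. Qed.

Section Pullback.
Variables (G Q X : group) (p : hom G Q) (f : hom X Q).

Definition pb_car := { gx : G * X | p (fst gx) = f (snd gx) }.

Lemma pb_eq (a b : G * X) (Ha : p (fst a) = f (snd a)) (Hb : p (fst b) = f (snd b)) :
  a = b -> exist _ a Ha = exist _ b Hb :> pb_car.
Proof. intros ->. f_equal. apply proof_irrelevance. Qed.

Definition pb_mul (u v : pb_car) : pb_car.
Proof.
  refine (exist _ (gmul (fst (proj1_sig u)) (fst (proj1_sig v)),
                   gmul (snd (proj1_sig u)) (snd (proj1_sig v))) _).
  simpl. rewrite !hmul, (proj2_sig u), (proj2_sig v). reflexivity.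
Defined.

Definition pb_inv (u : pb_car) : pb_car.
Proof.
  refine (exist _ (ginv (fst (proj1_sig u)), ginv (snd (proj1_sig u))) _).
  simpl. rewrite !homV, (proj2_sig u). reflexivity.
Defined.

Definition pb_one : pb_car.
Proof.
  refine (exist _ (gone, gone) _). simpl. rewrite !hom1. reflexivity.
Defined.

Lemma pb_mulA (x y z : pb_car) : pb_mul x (pb_mul y z) = pb_mul (pb_mul x y) z.
Proof. destruct x as [[] ?], y as [[] ?], z as [[] ?]; apply pb_eq; simpl; rewrite !gmulA; reflexivity. Qed.

Lemma pb_mul1 (x : pb_car) : pb_mul pb_one x = x.
Proof. destruct x as [[] ?]; apply pb_eq; simpl; rewrite !gmul1; reflexivity. Qed.

Lemma pb_mulV (x : pb_car) : pb_mul (pb_inv x) x = pb_one.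
Proof. destruct x as [[] ?]; apply pb_eq; simpl; rewrite !gmulV; reflexivity. Qed.

Definition pullback : group := Group pb_mulA pb_mul1 pb_mulV.

Definition pb_pr : hom pullback X := @Hom pullback X (fun u => snd (proj1_sig u)) (fun _ _ => eq_refl).

Definition pb_in_fun (K : group) (i : hom K G) (Hpi : forall k, p (i k) = gone)
  (k : K) : pullback.
Proof. refine (exist _ (i k, gone) _). simpl. rewrite Hpi, hom1. reflexivity. Defined.

Lemma pb_in_mul (K : group) (i : hom K G) (Hpi : forall k, p (i k) = gone) (x y : K) :
  pb_in_fun Hpi (gmul x y) = gmul (pb_in_fun Hpi x) (pb_in_fun Hpi y).
Proof. apply pb_eq; simpl. rewrite hmul, gmul1. reflexivity. Qed.

Definition pb_in (K : group) (i : hom K G) (Hpi : forall k, p (i k) = gone) :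
  hom K pullback := Hom (pb_in_mul Hpi).
End Pullback.


Set Implicit Arguments.
Unset Strict Implicit.

(* The proof rests on two observations, valid for every n:
   - For any short exact sequence 1 -> K -> G -> Q -> 1, the induced sequence
     of quotients by Gamma_n is automatically exact at G/Gamma_n G and at
     Q/Gamma_n Q: the lower central series is functorial and a surjection maps
     Gamma_n G onto Gamma_n Q.  Hence [ses_quot n i p] amounts to the
     injectivity of K/Gamma_n K -> G/Gamma_n G (lemma [ses_quot_of_injective]).
   - The pullback 1 -> K -> G x_Q X -> X -> 1 is again short exact, and the
     inclusion of K into G x_Q X followed by the first projection to G is the
     original inclusion of K into G.  Since homomorphisms preserve congruence
     modulo Gamma_n, injectivity modulo Gamma_n for the original extension
     forces it for the pullback. *)

Lemma ginv_mul (G : group) (a b : G) : ginv (gmul a b) = gmul (ginv b) (ginv a).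
Proof.
  symmetry. apply ginv_uniq.
  rewrite <- gmulA, (gmulA (ginv a) a), gmulV, gmul1, gmulV. reflexivity.
Qed.

Lemma ginv_one (G : group) : ginv (@gone G) = gone.
Proof. symmetry. apply ginv_uniq. apply gmul1. Qed.

Lemma ginv_inv (G : group) (a : G) : ginv (ginv a) = a.
Proof. symmetry. apply ginv_uniq. apply gmulVr. Qed.

Lemma lcs_one (G : group) (k : nat) : lcs G k gone.
Proof. destruct k; simpl; [exact I | apply gen_one]. Qed.

Lemma lcs_inv (G : group) (k : nat) (x : G) : lcs G k x -> lcs G k (ginv x).
Proof. destruct k; simpl; [intros; exact I | apply gen_inv]. Qed.

Lemma lcs_hom (G H : group) (f : hom G H) (k : nat) (x : G) :
  lcs G k x -> lcs H k (f x).
Proof.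
  revert x. induction k as [|k IH]; simpl; intros x Hx; [exact I|].
  induction Hx as [z [a [b [Ha ->]]] | | x y _ IHx _ IHy | x _ IHx].
  - apply gen_base. exists (f a), (f b). split; [apply IH; exact Ha|].
    unfold comm. rewrite !hmul, !homV. reflexivity.
  - rewrite hom1. apply gen_one.
  - rewrite hmul. apply gen_mul; assumption.
  - rewrite homV. apply gen_inv; assumption.
Qed.

(* A surjective homomorphism maps Gamma_k G onto Gamma_k H: every generating
   commutator of H lifts to a commutator of G. *)
Lemma lcs_surj (G H : group) (f : hom G H) (Hsurj : forall y, exists x, f x = y)
  (k : nat) (y : H) : lcs H k y -> exists x, lcs G k x /\ f x = y.
Proof.
  revert y. induction k as [|k IH]; simpl; intros y Hy.
  - destruct (Hsurj y) as [x Hx]. exists x; split; [exact I | exact Hx].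
  - induction Hy as [z [a [b [Ha ->]]] | | x y _ IHx _ IHy | x _ IHx].
    + destruct (IH a Ha) as [a' [Ha' Ea]]. destruct (Hsurj b) as [b' Eb].
      exists (comm a' b'). split.
      * apply gen_base. exists a', b'. split; [exact Ha' | reflexivity].
      * unfold comm. rewrite !hmul, !homV, Ea, Eb. reflexivity.
    + exists gone. split; [apply gen_one | apply hom1].
    + destruct IHx as [x' [Hx' Ex]], IHy as [y' [Hy' Ey]].
      exists (gmul x' y'). split; [apply gen_mul; assumption|].
      rewrite hmul, Ex, Ey. reflexivity.
    + destruct IHx as [x' [Hx' Ex]].
      exists (ginv x'). split; [apply gen_inv; assumption|].
      rewrite homV, Ex. reflexivity.
Qed.

Lemma modeq_hom (G H : group) (f : hom G H) (n : nat) (x y : G) :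
  modeq n x y -> modeq n (f x) (f y).
Proof.
  unfold modeq, Gamma. intro Hxy.
  rewrite <- homV, <- hmul. exact (lcs_hom f Hxy).
Qed.

Lemma ses_quot_of_injective (K G Q : group) (i : hom K G) (p : hom G Q) (n : nat) :
  ses i p ->
  (forall a b, modeq n (i a) (i b) -> modeq n a b) ->
  ses_quot n i p.
Proof.
  intros Hses Hinj. pose proof Hses as [_ [Hsurj Hker]].
  split; [exact Hinj | split]; unfold modeq, Gamma.
  - intro q. destruct (Hsurj q) as [g Hg]. exists g.
    rewrite Hg, gmulV. apply lcs_one.
  - intro g. split.
    + intro Hg. rewrite gmul1r in Hg. apply lcs_inv in Hg. rewrite ginv_inv in Hg.
      (* lift p g to y in Gamma_n G; then g y^-1 lies in the kernel of p *)
      destruct (lcs_surj Hsurj Hg) as [y [Hy Ey]].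
      destruct (proj1 (Hker (gmul g (ginv y)))) as [k Hk].
      { rewrite hmul, homV, Ey, gmulVr. reflexivity. }
      exists k. rewrite Hk, ginv_mul, ginv_inv, <- gmulA, gmulV, gmul1r. exact Hy.
    + intros [k Hk]. apply (lcs_hom p) in Hk.
      rewrite hmul, homV, (ses_comp Hses k) in Hk.
      rewrite ginv_one, gmul1 in Hk.
      rewrite gmul1r. apply lcs_inv. exact Hk.
Qed.

Definition pb_fst (G Q X : group) (p : hom G Q) (f : hom X Q) : hom (pullback p f) G :=
  @Hom (pullback p f) G (fun u => fst (proj1_sig u)) (fun _ _ => eq_refl).

Lemma pullback_ses (K G Q X : group) (i : hom K G) (p : hom G Q) (f : hom X Q)
  (Hpi : forall k, p (i k) = gone) :
  ses i p -> ses (pb_in f Hpi) (pb_pr p f).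
Proof.
  intros [Hinj [Hsurj Hker]]. split; [|split].
  - intros a b E. apply Hinj. exact (f_equal (fun u => fst (proj1_sig u)) E).
  - intro x. destruct (Hsurj (f x)) as [g Hg].
    exists (exist _ (g, x) Hg : pb_car p f). reflexivity.
  - intros [[g x] Hgx]. simpl. split.
    + intros ->. assert (Hpg : p g = gone) by (exact (eq_trans Hgx (hom1 f))).
      destruct (proj1 (Hker g) Hpg) as [k Hk]. exists k.
      apply pb_eq. simpl. rewrite Hk. reflexivity.
    + intros [k Hk]. apply (f_equal (fun u => snd (proj1_sig u))) in Hk.
      symmetry. exact Hk.
Qed.

(* Injectivity of K/Gamma_n K -> G/Gamma_n G passes to the pullback, because
   the inclusion of K into G x_Q X composed with [pb_fst] is i. *)
Lemma pullback_injective_mod (K G Q X : group) (i : hom K G) (p : hom G Q)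
  (f : hom X Q) (Hpi : forall k, p (i k) = gone) (n : nat) :
  (forall a b, modeq n (i a) (i b) -> modeq n a b) ->
  forall a b, modeq n (pb_in f Hpi a) (pb_in f Hpi b) -> modeq n a b.
Proof.
  intros Hinj a b Hab. apply Hinj. exact (modeq_hom (pb_fst p f) Hab).
Qed.

Theorem corollary3p7 :
  forall (c : nat), 1 <= c ->
  forall (K G Q : group) (i : hom K G) (p : hom G Q) (Hses : ses i p),
  ses_quot (S c) i p ->
  forall (X : group) (f : hom X Q),
  ses_quot (S c) (@pb_in G Q X p f K i (ses_comp Hses)) (@pb_pr G Q X p f).
Proof.
  intros c _ K G Q i p Hses [Hinj _] X f.
  apply ses_quot_of_injective.
  - apply pullback_ses. exact Hses.
  - apply pullback_injective_mod. exact Hinj.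
Qed.
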